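(* Let $(\mathcal D,\varphi,\mathrm{Fil}^\bullet)$ be a filtered $\varphi$-module over $\mathbb Q_p$ and let $M$ be a $\mathbb Z_p$-lattice in $\mathcal D$. Then $M$ is strongly divisible if and only if $M$ admits a $\mathbb Z_p$-basis $\mathcal B$ adapted to the filtered $\varphi$-module such that $\varphi\circ t_{HT,\mathcal B}^{-1}(M)=M$.
   Context: A filtered $\varphi$-module over $\mathbb Q_p$ is a finite-dimensional $\mathbb Q_p$-vector space $\mathcal D$ of dimension $d$ with a bijective linear map $\varphi$ and a decreasing, exhaustive, separated filtration $(\mathrm{Fil}^i\mathcal D)_{i\in\mathbb Z}$ by subspaces. Its Hodge–Tate weights $t_{HT,1}\le\dots\le t_{HT,d}$ are the integers $i$ with $\mathrm{Fil}^i\mathcal D\ne\mathrm{Fil}^{i+1}\mathcal D$, each counted $\dim\mathrm{Fil}^i\mathcal D/\mathrm{Fil}^{i+1}\mathcal D$ times. For $v\in\mathcal D$, $t_H(v)$ is the largest $j$ with $v\in\mathrm{Fil}^j\mathcal D$. A basis $(v_1,\dots,v_d)$ is adapted to the filtration if $v_i\in\mathrm{Fil}^{t_{HT,i}}\mathcal D$ for all $i$. For a lattice $M$, let $s_1\le\dots\le s_d$ be the $p$-adic valuations of the elementary divisors of $\varphi$ on $M$ (there are $\mathbb Z_p$-bases $(w_i),(w_i')$ of $M$ with $\varphi(w_i)=p^{s_i}w_i'$); a $\mathbb Z_p$-basis $(v_1,\dots,v_d)$ of $M$ is adapted to $\varphi$ if $(p^{-s_i}\varphi(v_i))_i$ is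 again a $\mathbb Z_p$-basis of $M$; it is adapted to the filtered $\varphi$-module if it is adapted both to $\varphi$ and to the filtration. $M$ is strongly divisible if it admits a basis adapted to the filtered $\varphi$-module and $(s_1,\dots,s_d)=(t_{HT,1},\dots,t_{HT,d})$ (equality of the Smith polygon of $\varphi$ on $M$ and the Hodge–Tate polygon). For a basis $\mathcal B=(v_i)$ adapted to the filtration, $t_{HT,\mathcal B}$ is the linear map with $t_{HT,\mathcal B}(v_i)=p^{t_H(v_i)}v_i$. *)

From HB Require Import structures.
From mathcomp Require Import all_boot all_order all_algebra.
Set Implicit Arguments. Unset Strict Implicit. Unset Printing Implicit Defensive.
Import Order.TTheory GRing.Theory Num.Theory.
Local Open Scope ring_scope.

(* Q_p is modelled as an abstract field K with a discrete valuation v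
   (values on nonzero elements) such that K is complete, p is a uniformizer
   (v p = 1) and the residue field is F_p; these properties characterize Q_p
   up to (valuation-preserving) isomorphism. Z_p = {x | x = 0 or v x >= 0}. *)

Section Defs.
Variable K : fieldType.
Variable v : K -> int.
Variable p : nat.

Definition pK : K := p%:R.

(* x \in p^n Z_p *)
Definition inPO (n : int) (x : K) : bool := (x == 0) || (n <= v x).
Definition integral (x : K) : bool := inPO 0 x.

Record is_Qp : Prop := {
  Qp_prime : prime p;
  Qp_p_neq0 : pK != 0;
  Qp_vM : forall x y, x != 0 -> y != 0 -> v (x * y) = v x + v y;
  Qp_vD : forall x y, x != 0 -> y != 0 -> x + y != 0 ->
            v x <= v (x + y) \/ v y <= v (x + y);
  Qp_vp : v pK = 1;
  Qp_residue : forall x, integral x ->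
            exists2 k : nat, (k < p)%N & inPO 1 (x - k%:R);
  Qp_complete : forall u : nat -> K,
      (forall n : int, exists N, forall m k, (N <= m)%N -> (N <= k)%N ->
          inPO n (u m - u k)) ->
      exists l, forall n : int, exists N, forall m, (N <= m)%N -> inPO n (u m - l)
}.

Variable d : nat.

(* D = K^d (row vectors); phi acts by x |-> x *m Phi; subspaces are row spaces. *)
Definition filtration (Fil : int -> 'M[K]_d) : Prop :=
  [/\ (forall i, (Fil (i + 1)%R <= Fil i)%MS),
      (forall x : 'rV[K]_d, exists i, (x <= Fil i)%MS) &
      (forall x : 'rV[K]_d, (forall i, (x <= Fil i)%MS) -> x = 0)].

Definition filtered_phi_module (Phi : 'M[K]_d) (Fil : int -> 'M[K]_d) : Prop :=
  Phi \in unitmx /\ filtration Fil.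

Definition isHT (Fil : int -> 'M[K]_d) (t : 'I_d -> int) : Prop :=
  (forall i j : 'I_d, (i <= j)%N -> t i <= t j) /\
  (forall j : int, #|[set i | t i == j]| = (\rank (Fil j) - \rank (Fil (j + 1)%R))%N).

Definition tH (Fil : int -> 'M[K]_d) (x : 'rV[K]_d) (j : int) : Prop :=
  (x <= Fil j)%MS /\ forall k, (x <= Fil k)%MS -> k <= j.

Definition integral_mx m n (c : 'M[K]_(m, n)) : Prop :=
  forall i j, integral (c i j).

Definition span_Zp (B : 'M[K]_d) (x : 'rV[K]_d) : Prop :=
  exists c : 'rV[K]_d, integral_mx c /\ x = c *m B.

Definition isZpBasis (M : 'rV[K]_d -> Prop) (B : 'M[K]_d) : Prop :=
  B \in unitmx /\ forall x, M x <-> span_Zp B x.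

Definition lattice (M : 'rV[K]_d -> Prop) : Prop := exists B, isZpBasis M B.

Definition isSmith (M : 'rV[K]_d -> Prop) (Phi : 'M[K]_d) (s : 'I_d -> int) : Prop :=
  (forall i j : 'I_d, (i <= j)%N -> s i <= s j) /\
  exists W W', [/\ isZpBasis M W, isZpBasis M W' &
                   forall i, row i W *m Phi = pK ^ (s i) *: row i W'].

Definition adapted_phi M Phi (B : 'M[K]_d) : Prop :=
  isZpBasis M B /\ exists s, isSmith M Phi s /\
     isZpBasis M (\matrix_(i < d) (pK ^ (- s i) *: (row i B *m Phi))).

Definition adapted_fil (Fil : int -> 'M[K]_d) (B : 'M[K]_d) : Prop :=
  exists t, isHT Fil t /\ forall i, (row i B <= Fil (t i))%MS.

Definition adapted M Phi Fil B : Prop := adapted_phi M Phi B /\ adapted_fil Fil B.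

Definition strongly_divisible M Phi Fil : Prop :=
  (exists B, adapted M Phi Fil B) /\
  exists s t, [/\ isSmith M Phi s, isHT Fil t & s = t].

(* matrix of t_{HT,B}: row i B |-> p^(h i) row i B, where h i = t_H(row i B) *)
Definition tHT_mx (B : 'M[K]_d) (h : 'I_d -> int) : 'M[K]_d :=
  invmx B *m diag_mx (\row_i (pK ^ (h i))) *m B.

End Defs.

From mathcomp Require Import all_boot all_order all_algebra.
From mathcomp Require Import zify.
Set Implicit Arguments. Unset Strict Implicit. Unset Printing Implicit Defensive.
Import Order.TTheory GRing.Theory Num.Theory.
Local Open Scope ring_scope.

(* Let B = (v_i) be adapted, with Hodge-Tate weights t_i, so v_i lies in Fil^(t_i).
   In fact t_H(v_i) = t_i: otherwise v_i and the v_l with t_l > t_i would be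
   #{l | t_l >= t_i + 1} + 1 independent vectors in Fil^(t_i + 1), whose
   dimension is #{l | t_l >= t_i + 1}.  Also phi o t_{HT,B}^-1 maps M onto the
   Z_p-span of the p^(-t_i) phi(v_i).  So both sides of the equivalence say
   that the p^(-t_i) phi(v_i) form a basis of M, i.e. that phi has Smith
   exponents t_i on M with respect to the bases B and (p^(-t_i) phi(v_i)).
   It remains that Smith exponents do not depend on the bases: if
   Z diag(p^a) = diag(p^b) G with Z in GL_d(Z_p) and G integral, then
   #{i | b_i >= k} <= #{i | a_i >= k}. *)

Lemma homo_le_of_card_ge n (a b : 'I_n -> int) :
  {homo a : i j / (i <= j)%N >-> i <= j} ->
  {homo b : i j / (i <= j)%N >-> i <= j} ->
  (forall k, #|[set i | (k <= b i)%R]| <= #|[set i | (k <= a i)%R]|)%N ->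
  forall i, b i <= a i.
Proof.
move=> a_homo b_homo card_le i; rewrite leNgt; apply/negP => ab.
have sub_gt : [set j | b i <= a j] \subset [set j : 'I_n | (i < j)%N].
  apply/subsetP => j; rewrite !inE => ij; rewrite ltnNge; apply/negP => /a_homo.
  lia.
have sub_ge : [set j : 'I_n | (i <= j)%N] \subset [set j | b i <= b j].
  by apply/subsetP => j; rewrite !inE => /b_homo.
have gt_ge : [set j : 'I_n | (i < j)%N] \proper [set j : 'I_n | (i <= j)%N].
  rewrite properE; apply/andP; split.
    by apply/subsetP => j; rewrite !inE => /ltnW.
  by apply/subsetPn; exists i; rewrite !inE ?leqnn ?ltnn.
have := card_le (b i).
have := subset_leq_card sub_gt; have := subset_leq_card sub_ge.
have := proper_card gt_ge; lia.
Qed.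

Lemma homo_eq_of_card_eq n (a b : 'I_n -> int) :
  {homo a : i j / (i <= j)%N >-> i <= j} ->
  {homo b : i j / (i <= j)%N >-> i <= j} ->
  (forall k, #|[set i | k <= b i]| = #|[set i | k <= a i]|) ->
  b =1 a.
Proof.
move=> a_homo b_homo card_eq i; apply/eqP; rewrite eq_le.
by rewrite !homo_le_of_card_ge // => k; rewrite card_eq.
Qed.

Section Selection.
Context {R : comNzRingType}.

Definition sel_mx n (S : {set 'I_n}) : 'M[R]_(#|S|, n) :=
  rowsub (fun k => enum_val k) 1%:M.

Lemma sel_mxE n (S : {set 'I_n}) k l : sel_mx S k l = (enum_val k == l)%:R.
Proof. by rewrite !mxE. Qed.

Lemma tr_sel_mxE n (S : {set 'I_n}) l k : (sel_mx S)^T l k = (enum_val k == l)%:R.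
Proof. by rewrite !mxE. Qed.

Lemma sel_mx_mul m n (S : {set 'I_n}) (A : 'M[R]_(n, m)) :
  sel_mx S *m A = rowsub (fun k => enum_val k) A.
Proof. by rewrite rowsubE. Qed.

Lemma sel_mx_mul_tr n (S : {set 'I_n}) : sel_mx S *m (sel_mx S)^T = 1%:M.
Proof.
apply/matrixP => i j; rewrite !mxE; under eq_bigr do rewrite sel_mxE tr_sel_mxE.
rewrite (bigD1 (enum_val i)) //= eqxx mul1r big1 ?addr0 => [|l /negPf li].
  by rewrite eq_sym (inj_eq enum_val_inj).
by rewrite eq_sym li mul0r.
Qed.

Lemma mul_tr_sel_mx m n (S : {set 'I_n}) (A : 'M[R]_(m, n)) :
  A *m (sel_mx S)^T *m sel_mx S = \matrix_(i, l) (if l \in S then A i l else 0).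
Proof.
apply/matrixP => i l; rewrite !mxE.
have colE k : (A *m (sel_mx S)^T) i k = A i (enum_val k).
  rewrite !mxE; under eq_bigr do rewrite tr_sel_mxE.
  rewrite (bigD1 (enum_val k)) //= eqxx mulr1 big1 ?addr0 //.
  by move=> j /negPf jk; rewrite eq_sym jk mulr0.
under eq_bigr do rewrite colE sel_mxE.
case: ifPn => [lS|lNS].
  rewrite (bigD1 (enum_rank_in lS l)) //= enum_rankK_in // eqxx mulr1.
  rewrite big1 ?addr0 // => k kl; case: eqP => [lk|]; last by rewrite mulr0.
  by case/eqP: kl; apply: enum_val_inj; rewrite enum_rankK_in.
apply: big1 => k _; case: eqP => [lk|]; last by rewrite mulr0.
by move: (enum_valP k); rewrite lk (negPf lNS).
Qed.

End Selection.

Lemma mxrank_sel_mul (F : fieldType) n (S : {set 'I_n}) (B : 'M[F]_n) :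
  B \in unitmx -> \rank (sel_mx S *m B) = #|S|.
Proof.
move=> B_unit; rewrite mxrankMfree ?row_free_unit //; apply/eqP.
rewrite eqn_leq rank_leq_row -{1}(mxrank1 F #|S|) -(sel_mx_mul_tr S).
exact: mxrankM_maxl.
Qed.

Section Filtration.
Variables (K : fieldType) (d : nat) (Fil : int -> 'M[K]_d).
Hypothesis Fil_filt : filtration Fil.

Lemma fil_mono i j : i <= j -> (Fil j <= Fil i)%MS.
Proof.
case: Fil_filt => Fil_decr _ _ ij; have -> : j = i + `|j - i|%N by lia.
elim: `|j - i|%N => [|n IHn]; first by rewrite addr0.
by apply: submx_trans IHn; rewrite -addn1 PoszD addrA Fil_decr.
Qed.

Variable t : 'I_d -> int.
Hypothesis t_HT : isHT Fil t.

Lemma rank_fil_step j :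
  \rank (Fil j) = (#|[set i | t i == j]| + \rank (Fil (j + 1)%R))%N.
Proof.
case: Fil_filt t_HT => Fil_decr _ _ [_ ->].
by rewrite subnK // mxrankS // Fil_decr.
Qed.

Lemma fil_eq0_above_weights J : (forall i, t i < J) -> Fil J = 0.
Proof.
case: Fil_filt => Fil_decr _ Fil_sep tJ.
have Fil_stat (n : nat) : (Fil J <= Fil (J + n))%MS.
  elim: n => [|n IHn]; first by rewrite addr0.
  apply: submx_trans IHn _; rewrite -addn1 PoszD addrA.
  have no_weight : [set i | t i == J + n] = set0.
    by apply/setP => i; rewrite !inE; have := tJ i; lia.
  have := rank_fil_step (J + n); rewrite no_weight cards0 add0n.
  by move/eqP; rewrite eq_sym (mxrank_leqif_sup (Fil_decr _)).2.
apply/row_matrixP => r; rewrite row0; apply: Fil_sep => i.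
apply: submx_trans (row_sub r (Fil J)) _.
have [iJ|Ji] := leP i J; first exact: fil_mono.
by have -> : i = J + `|i - J|%N by lia.
Qed.

Lemma rank_fil j : \rank (Fil j) = #|[set i | j <= t i]|.
Proof.
pose J := (\max_i `|t i|)%N.+1%:Z.
have tJ i : t i < J.
  have := leq_bigmax (F := fun i => `|t i|%N) i; rewrite /J; lia.
have card_step k :
    #|[set i | k <= t i]| = (#|[set i | t i == k]| + #|[set i | (k + 1 <= t i)%R]|)%N.
  by rewrite -(cardsID [set i | t i == k]); congr (_ + _)%N;
    apply: eq_card => i; rewrite !inE; lia.
have above k : J <= k -> \rank (Fil k) = #|[set i | k <= t i]|.
  move=> Jk; have := fil_mono Jk; rewrite (fil_eq0_above_weights tJ) submx0 => /eqP->.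
  rewrite mxrank0; apply/esym/eqP; rewrite cards_eq0.
  by apply/eqP/setP => i; rewrite !inE; have := tJ i; lia.
have below (n : nat) : \rank (Fil (J - n%:Z)) = #|[set i | J - n%:Z <= t i]|.
  elim: n => [|n IHn]; first by rewrite subr0 above.
  rewrite rank_fil_step card_step (_ : J - n.+1%:Z + 1 = J - n%:Z) ?IHn //; lia.
have [Jj|jJ] := leP J j; first exact: above.
by have -> : j = J - `|J - j|%N%:Z by lia.
Qed.

Lemma adapted_row_notin_next (B : 'M[K]_d) :
  B \in unitmx -> (forall i, (row i B <= Fil (t i))%MS) ->
  forall i, ~~ (row i B <= Fil (t i + 1))%MS.
Proof.
move=> B_unit B_adapted i; apply/negP => Bi_next.
set T := i |: [set l | t i + 1 <= t l].
have : (sel_mx T *m B <= Fil (t i + 1))%MS.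
  apply/row_subP => k; rewrite sel_mx_mul row_rowsub.
  have := enum_valP k; rewrite !inE => /orP[/eqP->//|ik].
  exact: submx_trans (B_adapted _) (fil_mono ik).
move/mxrankS; rewrite mxrank_sel_mul // rank_fil cardsU1 inE.
by rewrite (_ : (t i + 1 <= t i) = false) ?add1n ?ltnn //; lia.
Qed.

Lemma tH_uniq x j j' : tH Fil x j -> tH Fil x j' -> j = j'.
Proof. by move=> [xj j_max] [xj' j'_max]; apply/eqP; rewrite eq_le j_max ?j'_max. Qed.

Lemma adapted_tH (B : 'M[K]_d) :
  B \in unitmx -> (forall i, (row i B <= Fil (t i))%MS) ->
  forall i, tH Fil (row i B) (t i).
Proof.
move=> B_unit B_adapted i; split=> // k Bi_k; rewrite leNgt; apply/negP => ik.
have /negP := adapted_row_notin_next B_unit B_adapted i; apply.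
by apply: submx_trans Bi_k (fil_mono _); rewrite lezD1.
Qed.

End Filtration.

Lemma HT_uniq (K : fieldType) d (Fil : int -> 'M[K]_d) t t' :
  filtration Fil -> isHT Fil t -> isHT Fil t' -> t' =1 t.
Proof.
move=> Fil_filt t_HT t'_HT.
apply: homo_eq_of_card_eq; [by case: t_HT|by case: t'_HT|] => k.
by rewrite -(rank_fil Fil_filt t_HT) -(rank_fil Fil_filt t'_HT).
Qed.

Section Valuation.
Variables (K : fieldType) (v : K -> int) (p : nat).
Hypothesis Qp : is_Qp v p.
Local Notation pK := (pK K p).
Local Notation inPO := (inPO v).

Lemma pK_neq0 : pK != 0. Proof. exact: Qp_p_neq0 Qp. Qed.

Lemma vM x y : x != 0 -> y != 0 -> v (x * y) = v x + v y.
Proof. by move=> x0 y0; have := Qp_vM Qp x0 y0. Qed.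

Lemma v1 : v 1 = 0.
Proof. by apply: (addrI (v 1)); rewrite addr0 -vM ?oner_neq0 ?mulr1. Qed.

Lemma vV x : x != 0 -> v x^-1 = - v x.
Proof.
by move=> x0; have := vM x0 (invr_neq0 x0); rewrite divff // v1; lia.
Qed.

Lemma v_expz n : v (pK ^ n) = n.
Proof.
have v_exp (m : nat) : v (pK ^+ m) = m.
  elim: m => [|m IHm]; first by rewrite expr0 v1.
  by rewrite exprS vM ?expf_neq0 ?pK_neq0 // IHm (Qp_vp Qp); lia.
case: n => m; first exact: v_exp.
by rewrite NegzE -exprnN vV ?v_exp ?expf_neq0 ?pK_neq0.
Qed.

Lemma inPO0 n : inPO n 0. Proof. by rewrite /inPO eqxx. Qed.

Lemma inPOD n x y : inPO n x -> inPO n y -> inPO n (x + y).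
Proof.
rewrite /inPO; have [->|x0] := eqVneq x 0; first by rewrite add0r.
have [->|y0] := eqVneq y 0; first by rewrite addr0 (negPf x0).
have [//|xy0] := eqVneq (x + y) 0.
move=> /= nx ny; case: (Qp_vD Qp x0 y0 xy0) => h; [exact: le_trans nx h|exact: le_trans ny h].
Qed.

Lemma inPO_sum n (I : finType) (F : I -> K) :
  (forall i, inPO n (F i)) -> inPO n (\sum_i F i).
Proof. by move=> F_n; apply: (big_ind (inPO n)) => //; [exact: inPO0|exact: inPOD]. Qed.

Lemma inPOM a b x y : inPO a x -> inPO b y -> inPO (a + b) (x * y).
Proof.
rewrite /inPO; have [->|x0] := eqVneq x 0; first by rewrite mul0r eqxx.
have [->|y0] := eqVneq y 0; first by rewrite mulr0 eqxx.
by rewrite mulf_eq0 (negPf x0) (negPf y0) /= vM //; lia.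
Qed.

Lemma inPOW a b x : a <= b -> inPO b x -> inPO a x.
Proof. by rewrite /inPO => ab /orP[->//|bx]; apply/orP; right; lia. Qed.

Lemma inPO_expz n : inPO n (pK ^ n).
Proof. by rewrite /inPO v_expz lexx orbT. Qed.

Lemma integral_nat (b : bool) : integral v b%:R.
Proof. by case: b; rewrite /integral /inPO ?v1 ?eqxx ?orbT. Qed.

Lemma not_inPO1_1 : ~~ inPO 1 1.
Proof. by rewrite /inPO oner_eq0 v1. Qed.

Lemma intmx_mul m n k (A : 'M[K]_(m, n)) (B : 'M[K]_(n, k)) :
  integral_mx v A -> integral_mx v B -> integral_mx v (A *m B).
Proof.
move=> A_int B_int i j; rewrite mxE; apply: inPO_sum => l.
by have := inPOM (A_int i l) (B_int l j); rewrite addr0.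
Qed.

Lemma rV_normalize n (x : 'rV[K]_n) : x != 0 ->
  exists c i, integral_mx v (c *: x) /\ (c *: x) 0 i = 1.
Proof.
move=> x_neq0; have [j xj_neq0] : exists j, x 0 j != 0.
  apply/existsP; apply: contraR x_neq0 => /existsPn x0; apply/eqP/rowP => j.
  by rewrite mxE; apply/eqP/negbNE.
have [i xi_neq0 xi_min] := arg_minP (P := fun i => x 0 i != 0) (fun i => v (x 0 i)) xj_neq0.
exists (x 0 i)^-1, i; split; last by rewrite mxE mulVf.
move=> i' l; rewrite ord1 mxE /integral /inPO mulf_eq0 invr_eq0 (negPf xi_neq0) /=.
have [//|xl_neq0 /=] := eqVneq (x 0 l) 0.
by rewrite vM ?invr_neq0 // vV // addrC subr_ge0 xi_min.
Qed.

(* A kernel vector, scaled to be integral with some entry 1, would satisfy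
   [y = p (y H)], putting that entry in [p Z_p]. *)
Lemma unitmx_1_sub_p n (H : 'M[K]_n) : integral_mx v H -> 1%:M - pK *: H \in unitmx.
Proof.
move=> H_int; rewrite unitmxE unitfE; apply/negP => /det0P[x x_neq0 x_ker].
have [c [i [y_int yi]]] := rV_normalize x_neq0.
set y := c *: x in y_int yi.
have y_eq : y = pK *: (y *m H).
  apply/eqP; rewrite -subr_eq0 scalemxAr -{1}(mulmx1 y) -mulmxBr.
  by rewrite -scalemxAl x_ker scaler0.
have : inPO 1 (y 0 i).
  rewrite y_eq mxE -[1]addr0.
  exact: inPOM (inPO_expz 1) (intmx_mul y_int H_int 0 i).
by rewrite yi (negPf not_inPO1_1).
Qed.

(* Modulo p the rows of Z indexed by T live on the columns in S, and they
   still have a right inverse there, as 1 - pH is invertible. *)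
Lemma card_le_of_unimodular_block n (Z X : 'M[K]_n) (T S : {set 'I_n}) :
  integral_mx v Z -> integral_mx v X -> Z *m X = 1%:M ->
  (forall i l, i \in T -> l \notin S -> inPO 1 (Z i l)) -> (#|T| <= #|S|)%N.
Proof.
move=> Z_int X_int ZX Z_block.
set ZT := sel_mx T *m Z; set E := ZT *m (sel_mx S)^T.
set F := pK^-1 *: (ZT - E *m sel_mx S).
have F_int : integral_mx v F.
  move=> i l; rewrite /F /E mul_tr_sel_mx /ZT sel_mx_mul !mxE; case: ifPn => [_|lS].
    by rewrite subrr mulr0; apply: inPO0.
  have := inPOM (inPO_expz (-1)) (Z_block _ _ (enum_valP i) lS).
  by rewrite subr0 addNr exprN1.
have E_sel : E *m sel_mx S = ZT - pK *: F.
  by rewrite /F scalerA mulfV ?pK_neq0 // scale1r opprB addrC subrK.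
have ZT_X : ZT *m X = sel_mx T by rewrite /ZT -mulmxA ZX mulmx1.
have E_unit : E *m (sel_mx S *m X *m (sel_mx T)^T)
              = 1%:M - pK *: (F *m X *m (sel_mx T)^T).
  by rewrite !mulmxA E_sel !mulmxBl ZT_X sel_mx_mul_tr -!scalemxAl.
have sel_int : integral_mx v (sel_mx T)^T.
  by move=> l k; rewrite tr_sel_mxE integral_nat.
rewrite -(mxrank_unit (unitmx_1_sub_p (intmx_mul (intmx_mul F_int X_int) sel_int))).
by rewrite -E_unit (leq_trans (mxrankM_maxl _ _)) ?rank_leq_col.
Qed.

Definition pdiag n (a : 'I_n -> int) : 'M[K]_n := diag_mx (\row_i pK ^ a i).

Lemma smith_card_le n (a b : 'I_n -> int) (Z X G : 'M[K]_n) k :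
  integral_mx v Z -> integral_mx v X -> integral_mx v G -> Z *m X = 1%:M ->
  Z *m pdiag a = pdiag b *m G ->
  (#|[set i | (k <= b i)%R]| <= #|[set i | (k <= a i)%R]|)%N.
Proof.
move=> Z_int X_int G_int ZX ZG.
apply: card_le_of_unimodular_block Z_int X_int ZX _ => i l; rewrite !inE => ki kl.
have := congr1 (fun A : 'M[K]_n => A i l) ZG; rewrite mul_mx_diag mul_diag_mx !mxE => Zil.
have -> : Z i l = pK ^ (b i - a l) * G i l.
  rewrite addrC expfzDr ?pK_neq0 // -mulrA -Zil mulrCA -expfzDr ?pK_neq0 //.
  by rewrite addNr expr0z mulr1.
by apply: inPOW (inPOM (inPO_expz _) (G_int i l)); lia.
Qed.

Lemma basis_change n (M : 'rV[K]_n -> Prop) W V :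
  isZpBasis v M W -> isZpBasis v M V -> exists2 X, integral_mx v X & W = X *m V.
Proof.
move=> [_ W_basis] [_ V_basis].
have W_in_V i : exists c : 'rV[K]_n, integral_mx v c /\ row i W = c *m V.
  apply/V_basis/W_basis; exists (delta_mx 0 i); rewrite -rowE; split=> // j l.
  by rewrite mxE integral_nat.
have [c c_spec] := fin_all_exists W_in_V.
exists (\matrix_i c i); first by move=> i j; rewrite mxE; case: (c_spec i) => + _; apply.
by apply/row_matrixP => i; rewrite row_mul rowK; case: (c_spec i).
Qed.

Lemma smith_mx n (Phi : 'M[K]_n) s (W W' : 'M[K]_n) :
  (forall i, row i W *m Phi = pK ^ s i *: row i W') -> W *m Phi = pdiag s *m W'.
Proof.
move=> W_Phi; apply/row_matrixP => i; rewrite row_mul W_Phi mul_diag_mx.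
by apply/rowP => j; rewrite !mxE.
Qed.

Lemma smith_uniq n (M : 'rV[K]_n -> Prop) Phi s s' :
  isSmith v p M Phi s -> isSmith v p M Phi s' -> s' =1 s.
Proof.
suff card_le t t' : isSmith v p M Phi t -> isSmith v p M Phi t' ->
    forall k, (#|[set i | (k <= t' i)%R]| <= #|[set i | (k <= t i)%R]|)%N.
  move=> s_smith s'_smith; apply: homo_eq_of_card_eq.
  - by case: s_smith.
  - by case: s'_smith.
  by move=> k; apply/eqP; rewrite eqn_leq !card_le.
move=> [_ [W [W' [W_basis W'_basis W_Phi]]]] [_ [V [V' [V_basis V'_basis V_Phi]]]] k.
have [X X_int WX] := basis_change W_basis V_basis.
have [X1 X1_int VX1] := basis_change V_basis W_basis.
have [Y Y_int WY] := basis_change W'_basis V'_basis.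
have [Y1 Y1_int VY1] := basis_change V'_basis W'_basis.
have unit_inj (C : 'M[K]_n) : C \in unitmx -> injective (mulmx^~ C : 'M_n -> 'M_n).
  by rewrite -row_free_unit; apply: row_free_inj.
have X1X : X1 *m X = 1%:M.
  by apply: (unit_inj V); [case: V_basis|rewrite /= -mulmxA -WX -VX1 mul1mx].
have YY1 : Y *m Y1 = 1%:M.
  by apply: (unit_inj W'); [case: W'_basis|rewrite /= -mulmxA -VY1 -WY mul1mx].
have tY : pdiag t *m Y = X *m pdiag t'.
  apply: (unit_inj V'); first by case: V'_basis.
  by rewrite /= -mulmxA -WY -(smith_mx W_Phi) WX -mulmxA (smith_mx V_Phi) mulmxA.
apply: (smith_card_le (Z := X1) (X := X) (G := Y1)) => //.
by rewrite -[X1 *m _]mulmx1 -YY1 mulmxA -(mulmxA X1) tY mulmxA X1X mul1mx.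
Qed.

(* The rows [p^(-h i) phi(v_i)], i.e. the image of the basis [B = (v_i)]
   under [phi o t_{HT,B}^-1] when [h i = t_H(v_i)]. *)
Definition phiHT_mx n (B Phi : 'M[K]_n) (h : 'I_n -> int) : 'M[K]_n :=
  \matrix_i (pK ^ (- h i) *: (row i B *m Phi)).

Lemma phiHT_mxE n (B Phi : 'M[K]_n) h :
  phiHT_mx B Phi h = pdiag (fun i => - h i) *m B *m Phi.
Proof.
apply/row_matrixP => i; rewrite rowK row_mul mul_diag_mx scalemxAl.
by congr (_ *m _); apply/rowP => j; rewrite !mxE.
Qed.

Lemma eq_phiHT_mx n (B Phi : 'M[K]_n) h h' :
  h =1 h' -> phiHT_mx B Phi h = phiHT_mx B Phi h'.
Proof. by move=> hh'; apply/row_matrixP => i; rewrite !rowK hh'. Qed.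

Lemma pdiagN n (a : 'I_n -> int) : pdiag a *m pdiag (fun i => - a i) = 1%:M.
Proof.
apply/matrixP => i j; rewrite mul_diag_mx !mxE.
by case: eqP => _; rewrite ?mulr1n ?mulr0n ?mulr0 // -expfzDr ?pK_neq0 // subrr.
Qed.

Lemma invmx_tHT_mx n (B : 'M[K]_n) h : B \in unitmx ->
  invmx (tHT_mx p B h) = invmx B *m pdiag (fun i => - h i) *m B.
Proof.
move=> B_unit; set U := _ *m B.
have TU : tHT_mx p B h *m U = 1%:M.
  rewrite /tHT_mx /U -!mulmxA (mulmxA B) mulmxV // mul1mx.
  by rewrite (mulmxA (pdiag h)) pdiagN mul1mx mulVmx.
have [T_unit _] := mulmx1_unit TU.
by rewrite -[invmx _]mulmx1 -TU mulmxA mulVmx // mul1mx.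
Qed.

Lemma isZpBasis_phiHT_mx n (M : 'rV[K]_n -> Prop) (B Phi : 'M[K]_n) h :
  Phi \in unitmx -> isZpBasis v M B ->
  isZpBasis v M (phiHT_mx B Phi h) <->
  (forall y, M y <-> exists x, M x /\ y = x *m invmx (tHT_mx p B h) *m Phi).
Proof.
move=> Phi_unit [B_unit B_basis].
have image_span y : (exists x, M x /\ y = x *m invmx (tHT_mx p B h) *m Phi)
                    <-> span_Zp v (phiHT_mx B Phi h) y.
  rewrite invmx_tHT_mx // phiHT_mxE; split.
    move=> [_ [/B_basis[c [c_int ->]] ->]]; exists c; split=> //.
    by rewrite !mulmxA mulmxK.
  move=> [c [c_int ->]]; exists (c *m B); split; first by apply/B_basis; exists c.
  by rewrite !mulmxA mulmxK.
have phiHT_unit : phiHT_mx B Phi h \in unitmx.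
  rewrite phiHT_mxE !unitmx_mul B_unit Phi_unit !andbT.
  by case: (mulmx1_unit (pdiagN h)).
split=> [[_ basis] y|image_M]; first by rewrite basis image_span.
by split=> // y; rewrite image_M image_span.
Qed.

Lemma isSmith_phiHT_mx n (M : 'rV[K]_n -> Prop) (B Phi : 'M[K]_n) (s : 'I_n -> int) :
  {homo s : i j / (i <= j)%N >-> i <= j} ->
  isZpBasis v M B -> isZpBasis v M (phiHT_mx B Phi s) -> isSmith v p M Phi s.
Proof.
move=> s_homo B_basis phiHT_basis; split=> //; exists B, (phiHT_mx B Phi s).
by split=> // i; rewrite rowK scalerA -expfzDr ?pK_neq0 // subrr scale1r.
Qed.

End Valuation.

Unset Implicit Arguments.

Theorem mainTheorem7 (K : fieldType) (v : K -> int) (p : nat) (d : nat)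
    (Phi : 'M[K]_d) (Fil : int -> 'M[K]_d) (M : 'rV[K]_d -> Prop) :
  is_Qp v p ->
  filtered_phi_module Phi Fil ->
  lattice v M ->
  strongly_divisible v p M Phi Fil <->
  exists B : 'M[K]_d, adapted v p M Phi Fil B /\
    exists h : 'I_d -> int, (forall i, tH Fil (row i B) (h i)) /\
      (forall y : 'rV[K]_d,
         M y <-> exists x, M x /\ y = x *m invmx (tHT_mx p B h) *m Phi).
Proof.
move=> Qp [Phi_unit Fil_filt] _; split.
  move=> [[B B_adapted] [s [t' [s_smith t'_HT s_t']]]].
  have [[B_basis [s' [s'_smith phiHT_basis]]] [t [t_HT B_fil]]] := B_adapted.
  have B_unit : B \in unitmx by case: B_basis.
  have s'_t : s' =1 t.
    move=> i; rewrite (smith_uniq Qp s_smith s'_smith) s_t'.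
    exact: HT_uniq Fil_filt t_HT t'_HT i.
  exists B; split=> //; exists t; split; first exact: adapted_tH.
  by apply/(isZpBasis_phiHT_mx Qp); rewrite // -(eq_phiHT_mx p B Phi s'_t).
move=> [B [B_adapted [h [B_tH image_M]]]].
have [[B_basis _] [t [t_HT B_fil]]] := B_adapted.
have B_unit : B \in unitmx by case: B_basis.
have h_t : h =1 t.
  by move=> i; apply: tH_uniq (B_tH i) (adapted_tH Fil_filt t_HT B_unit B_fil i).
split; first by exists B.
exists t, t; split=> //; apply: (isSmith_phiHT_mx Qp _ B_basis); first by case: t_HT.
by rewrite -(eq_phiHT_mx p B Phi h_t); apply/(isZpBasis_phiHT_mx Qp).
Qed.
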